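(* There are constants $c,C>0$ such that for all $n\ge2$ and all $j\le n$, $c\,n\le\mu(D_n,z_j,e_j)\le C\,n$, i.e. $\mu(D_n,z_j,e_j)=\Theta(n)$.
   Context: For $n\ge2$ let $k=\lceil\sqrt n\rceil-1$ and $S_k=\{(-1+\frac{2p}{k})+i(-1+\frac{2q}{k}):0\le p,q\le k\}\subset\mathbb{C}$. $D_n$ is the diagonal matrix whose diagonal entries $z_1,\dots,z_n$ are the first $n$ elements of $S_k$ in lexicographic order; $e_j$ are the standard basis vectors. For $v\ne0$, $T_v=v^\perp\subset\mathbb{C}^n$, $P_{v^\perp}$ the orthogonal projection onto $T_v$, $A_{\lambda,v}=P_{v^\perp}(A-\lambda\mathrm{Id})|_{T_v}$, and $\mu(A,\lambda,v)=\|A\|_F\|A_{\lambda,v}^{-1}\|$ (Frobenius norm times operator norm; $\infty$ if not invertible). *)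

From HB Require Import structures.
From mathcomp Require Import all_boot all_order all_algebra.
From mathcomp Require Import complex.
Local Open Scope complex_scope.
From mathcomp Require Import boolp classical_sets reals constructive_ereal ereal.
Set Implicit Arguments. Unset Strict Implicit. Unset Printing Implicit Defensive.
Import Order.TTheory GRing.Theory Num.Theory.
Local Open Scope ring_scope.
Local Open Scope classical_set_scope.

Section Defs.
Variable R : realType.
Local Notation C := (R[i]).

Definition csq (x : C) : R := let: a +i* b := x in a ^+ 2 + b ^+ 2.

Definition hdot (n : nat) (u w : 'cV[C]_n) : C :=
  \sum_(i < n) conjc (u i 0) * w i 0.

Definition vnorm (n : nat) (u : 'cV[C]_n) : R := Num.sqrt (\sum_(i < n) csq (u i 0)).

Definition frob (n : nat) (A : 'M[C]_n) : R :=
  Num.sqrt (\sum_(i < n) \sum_(j < n) csq (A i j)).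

Definition Tperp (n : nat) (v : 'cV[C]_n) : set 'cV[C]_n := [set u | hdot v u = 0].

Definition projperp (n : nat) (v u : 'cV[C]_n) : 'cV[C]_n :=
  u - (hdot v u / hdot v v) *: v.

(* A_{lambda,v} = P_{v^perp} (A - lambda Id) restricted to T_v *)
Definition Alv (n : nat) (A : 'M[C]_n) (l : C) (v : 'cV[C]_n) (u : 'cV[C]_n) : 'cV[C]_n :=
  projperp v ((A - l%:M) *m u).

Definition Alv_invertible (n : nat) (A : 'M[C]_n) (l : C) (v : 'cV[C]_n) : Prop :=
  (forall u1 u2, Tperp v u1 -> Tperp v u2 -> Alv A l v u1 = Alv A l v u2 -> u1 = u2) /\
  (forall w, Tperp v w -> exists2 u, Tperp v u & Alv A l v u = w).

(* operator norm of A_{lambda,v}^{-1}: sup over unit w in T_v of |A_{lambda,v}^{-1} w|,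
   where A_{lambda,v}^{-1} w is the (unique) u in T_v with A_{lambda,v} u = w *)
Definition inv_opnorm (n : nat) (A : 'M[C]_n) (l : C) (v : 'cV[C]_n) : \bar R :=
  ereal_sup [set (vnorm u)%:E | u in
    [set u | Tperp v u /\ exists2 w, Tperp v w /\ vnorm w = 1 & Alv A l v u = w]].

Definition mu (n : nat) (A : 'M[C]_n) (l : C) (v : 'cV[C]_n) : \bar R :=
  if `[< Alv_invertible A l v >] then ((frob A)%:E * inv_opnorm A l v)%E else +oo%E.

Definition ceil_sqrt (n : nat) : nat := find (fun m => n <= m * m)%N (iota 0 n.+1).

Definition kk (n : nat) : nat := (ceil_sqrt n).-1.

(* S_k listed in lexicographic order (real part, then imaginary part) *)
Definition Sk (k : nat) : seq C :=
  [seq (-1 + 2 * p%:R / k%:R) +i* (-1 + 2 * q%:R / k%:R) | p <- iota 0 k.+1, q <- iota 0 k.+1].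

(* z_j: the j-th (0-based) element of S_k in lexicographic order, k = ceil(sqrt n) - 1 *)
Definition zz (n : nat) (j : 'I_n) : C := nth 0 (Sk (kk n)) j.

Definition Dn (n : nat) : 'M[C]_n := \matrix_(i < n, j < n) if i == j then zz i else 0.

Definition ee (n : nat) (j : 'I_n) : 'cV[C]_n := delta_mx j 0.

End Defs.

(* On e_j^perp the map A_{z_j,e_j} of the diagonal matrix D_n is again diagonal, with
   entries z_i - z_j (i <> j), so the norm of its inverse is the reciprocal of the distance
   from z_j to the nearest other z_i.  On the grid S_k that distance is the mesh 2/k, and it
   is attained by a grid neighbour of z_j, so mu(D_n, z_j, e_j) = |D_n|_F * k/2.  Since
   k^2 < n <= (k+1)^2, it remains to see |D_n|_F^2 ~ n: every |z_i|^2 is at most 2, and the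
   roughly n/4 points in the rows of real part at most -1/2 contribute at least 1/4 each. *)

From HB Require Import structures.
From mathcomp Require Import all_boot all_order all_algebra.
From mathcomp Require Import complex.
From mathcomp Require Import boolp classical_sets reals constructive_ereal ereal.
From mathcomp Require Import zify ring lra.
Import Order.TTheory GRing.Theory Num.Theory.

Lemma nth_allpairs {S T U : Type} (f : S -> T -> U) (s : seq S) (t : seq T)
    x0 y0 z0 i j :
  i < size s -> j < size t ->
  nth z0 [seq f x y | x <- s, y <- t] (i * size t + j) = f (nth x0 s i) (nth y0 t j).
Proof.
elim: s i => [|x s IHs] [|i] //= ltis ltjt.
  by rewrite nth_cat size_map ltjt (nth_map y0).
rewrite nth_cat size_map mulSn -addnA ltnNge leq_addr /=.
by rewrite addKn IHs.
Qed.

Section CeilSqrt.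
Variable n : nat.

Let sqr_ge_n m := n <= m * m.

Let has_sqr_ge_n : has sqr_ge_n (iota 0 n.+1).
Proof. by apply/hasP; exists n; rewrite ?mem_iota /sqr_ge_n; nia. Qed.

Lemma ceil_sqrt_sqr_ge : n <= ceil_sqrt n * ceil_sqrt n.
Proof.
have := nth_find 0 has_sqr_ge_n; have := has_sqr_ge_n.
by rewrite has_find size_iota /ceil_sqrt => /nth_iota ->.
Qed.

Lemma ceil_sqrt_min m : m < ceil_sqrt n -> m * m < n.
Proof.
move=> ltm; have ltmn : m < n.+1.
  by apply: leq_trans ltm _; rewrite -(size_iota 0 n.+1) find_size.
by have := before_find 0 ltm; rewrite nth_iota // /sqr_ge_n ltnNge => ->.
Qed.

End CeilSqrt.

Lemma kk_bounds {n} : 2 <= n -> [/\ 1 <= kk n, kk n * kk n < n & n <= (kk n).+1 * (kk n).+1].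
Proof.
move=> n2; have sqr_ge := ceil_sqrt_sqr_ge n.
have ceil_ge2 : 2 <= ceil_sqrt n by case: (ceil_sqrt n) sqr_ge => [|[|c]]; lia.
have kkS : (kk n).+1 = ceil_sqrt n by rewrite /kk prednK // ltnW.
by split; rewrite ?kkS //; [rewrite -ltnS kkS | apply: ceil_sqrt_min; rewrite -kkS].
Qed.

Lemma quarter_rows_bounds {k n : nat} : 1 <= k -> k * k < n -> n <= k.+1 * k.+1 ->
  (k %/ 4).+1 * k.+1 <= n <= 4 * ((k %/ 4).+1 * k.+1).
Proof.
move=> k1 lo hi; have lek : 4 * (k %/ 4) <= k by rewrite mulnC leq_divM.
have ltk : k < 4 * (k %/ 4).+1 by rewrite mulnC ltn_ceil.
apply/andP; split; last by nia.
by case: (leqP k 1) => [k_le1|k_gt1]; nia.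
Qed.

Local Open Scope ring_scope.

Section ComplexVectors.
Variable R : realType.
Local Notation C := R[i].

Lemma csq0 : csq (0 : C) = 0.
Proof. by rewrite /= expr0n add0r. Qed.

Lemma csq1 : csq (1 : C) = 1.
Proof. by rewrite /= expr0n expr1n addr0. Qed.

Lemma csq_ge0 (x : C) : 0 <= csq x.
Proof. by case: x => a b; rewrite addr_ge0 ?sqr_ge0. Qed.

Lemma csqM (x y : C) : csq (x * y) = csq x * csq y.
Proof. by case: x => a b; case: y => c d /=; ring. Qed.

Lemma csq_gt0_neq0 (x : C) : 0 < csq x -> x != 0.
Proof. by apply: contraTneq => ->; rewrite csq0 ltxx. Qed.

Lemma hdot_ee n (j : 'I_n) (u : 'cV[C]_n) : hdot (ee R j) u = u j 0.
Proof.
rewrite /hdot (bigD1 j) //= big1 ?addr0 => [|i /negbTE neq_ij].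
  by rewrite mxE !eqxx conjc1 mul1r.
by rewrite mxE neq_ij conjc0 mul0r.
Qed.

Lemma Tperp_ee n (j : 'I_n) (u : 'cV[C]_n) : Tperp (ee R j) u <-> u j 0 = 0.
Proof. by rewrite /Tperp /= hdot_ee. Qed.

Lemma vnorm_scale_ee n (i : 'I_n) (c : C) : vnorm (c *: ee R i) = Num.sqrt (csq c).
Proof.
rewrite /vnorm (bigD1 i) //= big1 ?addr0 => [|i' /negbTE neq_i'i].
  by rewrite !mxE !eqxx mulr1.
by rewrite !mxE neq_i'i mulr0 csq0.
Qed.

End ComplexVectors.

Section DiagonalMatrix.
Variables (R : realType) (n : nat) (d : 'I_n -> R[i]) (j : 'I_n).
Local Notation D := (\matrix_(i < n, k < n) if i == k then d i else 0).
Local Notation A := (Alv D (d j) (ee R j)).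

Lemma diag_shift_mul_entry c (u : 'cV_n) i : ((D - c%:M) *m u) i 0 = (d i - c) * u i 0.
Proof.
rewrite mxE (bigD1 i) //= big1 ?addr0 => [|i' /negbTE neq_i'i].
  by rewrite !mxE !eqxx mulr1n.
by rewrite !mxE eq_sym neq_i'i mulr0n subr0 mul0r.
Qed.

Lemma Alv_diag_entry (u : 'cV_n) i : A u i 0 = (d i - d j) * u i 0.
Proof.
rewrite /Alv /projperp hdot_ee diag_shift_mul_entry subrr !mul0r scale0r subr0.
exact: diag_shift_mul_entry.
Qed.

Lemma frob_diag : frob D = Num.sqrt (\sum_(i < n) csq (d i)).
Proof.
congr Num.sqrt; apply: eq_bigr => i _.
rewrite (bigD1 i) //= big1 ?addr0 => [|i' /negbTE neq_i'i]; first by rewrite mxE eqxx.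
by rewrite mxE eq_sym neq_i'i csq0.
Qed.

Lemma Alv_diag_invertible :
  (forall i, i != j -> d i - d j != 0) -> Alv_invertible D (d j) (ee R j).
Proof.
move=> d_neq; split=> [u1 u2 /Tperp_ee u1j /Tperp_ee u2j eqA | w /Tperp_ee wj].
  apply/matrixP => i k; rewrite (ord1 k).
  have [->|neq_ij] := eqVneq i j; first by rewrite u1j u2j.
  by move/(congr1 (fun v : 'cV_n => v i 0)): eqA; rewrite !Alv_diag_entry; exact/mulfI/d_neq.
exists (\col_i (w i 0 / (d i - d j))); first by apply/Tperp_ee; rewrite mxE wj mul0r.
apply/matrixP => i k; rewrite (ord1 k) Alv_diag_entry mxE.
have [->|neq_ij] := eqVneq i j; first by rewrite wj subrr mul0r.
by rewrite mulrC divfK ?d_neq.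
Qed.

Variable dl : R.
Hypotheses (dl_gt0 : 0 < dl) (d_sep : forall i, i != j -> dl <= csq (d i - d j)).
Hypothesis d_near : exists2 i0, i0 != j & csq (d i0 - d j) = dl.

Lemma vnorm_Alv_diag_ge (u : 'cV_n) : u j 0 = 0 -> Num.sqrt dl * vnorm u <= vnorm (A u).
Proof.
move=> uj; rewrite /vnorm -sqrtrM ?(ltW dl_gt0) // ler_sqrt ?sumr_ge0 // => [|i _].
  rewrite mulr_sumr; apply: ler_sum => i _; rewrite Alv_diag_entry csqM.
  have [->|neq_ij] := eqVneq i j; first by rewrite uj csq0 !mulr0.
  by rewrite ler_wpM2r ?csq_ge0 ?d_sep.
exact: csq_ge0.
Qed.

Lemma inv_opnorm_diag : inv_opnorm D (d j) (ee R j) = (Num.sqrt dl^-1)%:E.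
Proof.
have sqrt_dl_gt0 : 0 < Num.sqrt dl by rewrite sqrtr_gt0.
apply/le_anti/andP; split.
  apply: ge_ereal_sup => _ [u [/Tperp_ee uj [w [_ norm_w] Au]] <-].
  rewrite lee_fin sqrtrV ?(ltW dl_gt0) // -[_^-1]mulr1 ler_pdivlMl //.
  by rewrite -norm_w -Au vnorm_Alv_diag_ge.
have [i0 neq_i0j dist_i0] := d_near.
have dji0 : (j == i0) = false by rewrite eq_sym (negbTE neq_i0j).
apply: ereal_sup_ubound; exists ((d i0 - d j)^-1 *: ee R i0).
  split; first by apply/Tperp_ee; rewrite !mxE dji0 mulr0.
  exists (ee R i0).
    split; first by apply/Tperp_ee; rewrite mxE dji0.
    by rewrite -[ee R i0]scale1r vnorm_scale_ee csq1 sqrtr1.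
  apply/matrixP => i k; rewrite (ord1 k) Alv_diag_entry !mxE.
  have [->|_] := eqVneq i i0; last by rewrite /= mulr0n !mulr0.
  rewrite /= mulr1 mulfV //.
  by apply: csq_gt0_neq0; rewrite dist_i0.
rewrite vnorm_scale_ee; congr (Num.sqrt _)%:E.
apply: (mulIf (lt0r_neq0 dl_gt0)); rewrite mulVf ?lt0r_neq0 // -dist_i0 -csqM.
by rewrite mulVf ?csq1 //; apply: csq_gt0_neq0; rewrite dist_i0.
Qed.

Lemma mu_diag : mu D (d j) (ee R j) = (frob D * Num.sqrt dl^-1)%:E.
Proof.
rewrite /mu asboolT ?inv_opnorm_diag //; apply: Alv_diag_invertible => i neq_ij.
by apply: csq_gt0_neq0; apply: (lt_le_trans dl_gt0); apply: d_sep.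
Qed.

End DiagonalMatrix.

Section Grid.
Variable R : realType.

Definition grid_coord (k p : nat) : R := -1 + 2 * p%:R / k%:R.

Definition grid_point (k p q : nat) : R[i] := (grid_coord k p +i* grid_coord k q)%C.

Lemma nth_Sk k i : (i < k.+1 * k.+1)%N ->
  nth 0 (Sk R k) i = grid_point k (i %/ k.+1) (i %% k.+1).
Proof.
move=> lti; have lt_div : (i %/ k.+1 < size (iota 0 k.+1))%N.
  by rewrite size_iota ltn_divLR.
have lt_mod : (i %% k.+1 < size (iota 0 k.+1))%N by rewrite size_iota ltn_pmod.
have := nth_allpairs (grid_point k) _ _ 0%N 0%N 0 _ _ lt_div lt_mod.
by rewrite size_iota -divn_eq !nth_iota ?ltn_pmod ?ltn_divLR.
Qed.

Lemma csq_grid_point_sub k p q p' q' : (0 < k)%N ->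
  csq (grid_point k p q - grid_point k p' q') =
  4 / k%:R ^+ 2 * ((p%:R - p'%:R) ^+ 2 + (q%:R - q'%:R) ^+ 2).
Proof.
move=> k_gt0; rewrite /= /grid_coord.
by field; rewrite pnatr_eq0 -lt0n.
Qed.

Lemma grid_coord_sqr_le1 k p : (0 < k)%N -> (p <= k)%N -> grid_coord k p ^+ 2 <= 1.
Proof.
move=> k_gt0 le_pk; have k_gt0R : 0 < k%:R :> R by rewrite ltr0n.
have ratio_le1 : p%:R / k%:R <= 1 :> R by rewrite ler_pdivrMr // mul1r ler_nat.
have ratio_ge0 : 0 <= p%:R / k%:R :> R by rewrite divr_ge0.
by rewrite /grid_coord -mulrA; nra.
Qed.

Lemma grid_coord_sqr_ge k p : (0 < k)%N -> (4 * p <= k)%N -> 1 / 4 <= grid_coord k p ^+ 2.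
Proof.
move=> k_gt0 le_4pk; have k_gt0R : 0 < k%:R :> R by rewrite ltr0n.
have le_4pk_R : 4 * p%:R <= k%:R :> R by rewrite -(natrM R 4 p) ler_nat.
have ratio_le : p%:R / k%:R <= 1 / 4 :> R by rewrite ler_pdivrMr //; lra.
have ratio_ge0 : 0 <= p%:R / k%:R :> R by rewrite divr_ge0.
by rewrite /grid_coord -mulrA; nra.
Qed.

Lemma sqr_natrB_ge1 (a b : nat) : a != b -> 1 <= (a%:R - b%:R : R) ^+ 2.
Proof.
move=> neq_ab; wlog lt_ab : a b neq_ab / (a < b)%N => [wlog_ab|].
  have [/wlog_ab->//|lt_ba|eq_ab] := ltngtP a b; last by rewrite eq_ab eqxx in neq_ab.
  by rewrite -sqrrN opprB wlog_ab // eq_sym.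
have : a%:R + 1 <= b%:R :> R by rewrite natr1 ler_nat.
by nra.
Qed.

End Grid.

Section GridDiagonalMatrix.
Variables (R : realType) (n : nat).
Hypothesis n_ge2 : (2 <= n)%N.
Local Notation k := (kk n).
Local Notation K := (kk n).+1.

Let k_gt0 : (0 < k)%N.
Proof. by have [] := kk_bounds n_ge2. Qed.

Lemma kk_sqr_bounds : n%:R / 4 <= (k%:R : R) ^+ 2 <= n%:R.
Proof.
have [k_ge1 kk_lt n_le] := kk_bounds n_ge2.
rewrite ler_pdivrMr // -natrX -natrM !ler_nat.
by apply/andP; split; nia.
Qed.

Lemma zz_at {i : 'I_n} {p q : nat} :
  (q < K)%N -> val i = (p * K + q)%N -> zz R i = grid_point R k p q.
Proof.
move=> lt_qK val_i; have [_ _ n_le] := kk_bounds n_ge2.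
rewrite /zz nth_Sk; last exact: leq_trans (ltn_ord i) n_le.
by rewrite val_i divnMDl // divn_small // addn0 modnMDl modn_small.
Qed.

Lemma zz_grid (i : 'I_n) : zz R i = grid_point R k (i %/ K) (i %% K).
Proof. exact: zz_at (ltn_pmod _ (ltn0Sn k)) (divn_eq i K). Qed.

Lemma zz_sep (i j : 'I_n) : i != j -> 4 / k%:R ^+ 2 <= csq (zz R i - zz R j).
Proof.
move=> neq_ij; rewrite !zz_grid csq_grid_point_sub //.
rewrite -[X in X <= _]mulr1 ler_wpM2l ?divr_ge0 ?exprn_ge0 //.
have [eq_div|neq_div] := eqVneq (i %/ K)%N (j %/ K)%N; last first.
  have := sqr_natrB_ge1 R _ _ neq_div.
  by have := sqr_ge0 ((i %% K)%N%:R - (j %% K)%N%:R : R); lra.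
have neq_mod : (i %% K != j %% K)%N.
  apply: contra neq_ij => /eqP eq_mod; apply/eqP/val_inj.
  by rewrite /= (divn_eq i K) (divn_eq j K) eq_div eq_mod.
by rewrite eq_div subrr expr0n add0r sqr_natrB_ge1.
Qed.

Lemma zz_nearest (j : 'I_n) : exists2 i, i != j & csq (zz R i - zz R j) = 4 / k%:R ^+ 2.
Proof.
suff [p [q [i [neq_ij lt_qK val_i unit_step]]]] : exists p q (i : 'I_n),
    [/\ i != j, (q < K)%N, val i = (p * K + q)%N &
        (p%:R - (j %/ K)%:R) ^+ 2 + (q%:R - (j %% K)%:R) ^+ 2 = 1 :> R].
  exists i => //.
  by rewrite (zz_at lt_qK val_i) zz_grid csq_grid_point_sub // unit_step mulr1.
have := divn_eq j K; have := ltn_pmod j (ltn0Sn k).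
move: (j %/ K)%N (j %% K)%N => p [|q] lt_qK val_j.
- case: p val_j => [|p] val_j.
  + exists 0%N, 1%N, (Ordinal n_ge2); split => //=.
    * by apply/eqP => /(congr1 val) /=; rewrite val_j.
    * by rewrite subrr expr0n add0r subr0 expr1n.
  + have lt_in : (p * K + 0 < n)%N by apply: leq_trans (ltn_ord j); rewrite val_j; nia.
    exists p, 0%N, (Ordinal lt_in); split => //=.
    * by apply/eqP => /(congr1 val) /=; rewrite val_j; nia.
    * by rewrite -natr1 subrr expr0n addr0; ring.
- have lt_in : (p * K + q < n)%N by apply: leq_trans (ltn_ord j); rewrite val_j; lia.
  exists p, q, (Ordinal lt_in); split => //=.
  * by apply/eqP => /(congr1 val) /=; rewrite val_j; lia.
  * exact: ltn_trans lt_qK.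
  * by rewrite -natr1 subrr expr0n add0r; ring.
Qed.

Lemma csq_zz_le2 (i : 'I_n) : csq (zz R i) <= 2.
Proof.
have [_ _ n_le] := kk_bounds n_ge2.
have le_div : ((i %/ K) <= k)%N by rewrite -ltnS ltn_divLR // (leq_trans (ltn_ord i)).
have le_mod : ((i %% K) <= k)%N by rewrite -ltnS ltn_pmod.
have := grid_coord_sqr_le1 R _ _ k_gt0 le_div.
by have := grid_coord_sqr_le1 R _ _ k_gt0 le_mod; rewrite zz_grid /=; lra.
Qed.

Lemma sum_csq_zz_ge : n%:R / 16 <= \sum_(i < n) csq (zz R i).
Proof.
have [k_ge1 kk_lt n_le] := kk_bounds n_ge2.
set M := ((k %/ 4).+1 * K)%N.
have /andP[le_Mn le_n4M] := quarter_rows_bounds k_ge1 kk_lt n_le.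
have quarter_le i : (i < M)%N -> 1 / 4 <= csq (nth 0 (Sk R k) i).
  move=> lt_iM; rewrite nth_Sk; last exact: leq_trans lt_iM (leq_trans le_Mn n_le).
  have le_4div : (4 * (i %/ K) <= k)%N.
    by apply: leq_trans (leq_divM k 4); rewrite mulnC leq_pmul2r // -ltnS ltn_divLR.
  have := grid_coord_sqr_ge R _ _ k_gt0 le_4div.
  by have := sqr_ge0 (grid_coord R k (i %% K)); rewrite /=; lra.
rewrite /zz -(big_mkord xpredT (fun i => csq (nth 0 (Sk R k) i))).
rewrite (big_cat_nat (leq0n M) le_Mn) /=.
apply: (@le_trans _ _ (\sum_(0 <= i < M) (1 / 4 : R))).
  rewrite sumr_const_nat subn0 -mulr_natr.
  have le_n4M_R : n%:R <= 4 * M%:R :> R by rewrite -(natrM R 4) ler_nat.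
  lra.
apply: (@le_trans _ _ (\sum_(0 <= i < M) csq (nth 0 (Sk R k) i))).
  by apply: ler_sum_nat => i /andP[_ /quarter_le].
by rewrite lerDl sumr_ge0 // => i _; exact: csq_ge0.
Qed.

Lemma frob_Dn_sqr_bounds : n%:R / 16 <= frob (Dn R n) ^+ 2 <= 2 * n%:R.
Proof.
have sum_ge0 : 0 <= \sum_(i < n) csq (zz R i) by rewrite sumr_ge0 // => i _; exact: csq_ge0.
rewrite /Dn frob_diag sqr_sqrtr // sum_csq_zz_ge /=.
apply: (@le_trans _ _ (\sum_(i < n) (2 : R))).
  by rewrite ler_sum // => i _; exact: csq_zz_le2.
by rewrite sumr_const card_ord mulr_natr.
Qed.

Lemma mu_Dn (j : 'I_n) : mu (Dn R n) (zz R j) (ee R j) = (frob (Dn R n) * (k%:R / 2))%:E.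
Proof.
have k_gt0R : 0 < k%:R :> R by rewrite ltr0n.
rewrite /Dn (@mu_diag R n (@zz R n) j (4 / k%:R ^+ 2)) ?divr_gt0 ?exprn_gt0 //; last first.
- exact: zz_nearest.
- by move=> i; exact: zz_sep.
have -> : (4 / k%:R ^+ 2)^-1 = (k%:R / 2) ^+ 2 :> R by field; rewrite gt_eqF.
by rewrite sqrtr_sqr ger0_norm // divr_ge0 // ltW.
Qed.

End GridDiagonalMatrix.

Theorem lemma2p20 (R : realType) :
  exists c Cst : R, 0 < c /\ 0 < Cst /\
    forall n : nat, (2 <= n)%N -> forall j : 'I_n,
      ((c * n%:R)%:E <= mu (Dn R n) (zz R j) (ee R j) /\
       mu (Dn R n) (zz R j) (ee R j) <= (Cst * n%:R)%:E)%E.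
Proof.
exists (1 / 16), 1; split; first lra; split; first lra.
move=> n n_ge2 j; rewrite mu_Dn // !lee_fin.
have /andP[F2_lo F2_hi] := frob_Dn_sqr_bounds R n n_ge2.
have /andP[k2_lo k2_hi] := kk_sqr_bounds R n n_ge2.
set F := frob (Dn R n) in F2_lo F2_hi *; set k := (kk n)%:R in k2_lo k2_hi *.
have prod_lo : n%:R / 16 * (n%:R / 4) <= F ^+ 2 * k ^+ 2 by apply: ler_pM; rewrite ?divr_ge0.
have prod_hi : F ^+ 2 * k ^+ 2 <= 2 * n%:R * n%:R by apply: ler_pM; rewrite ?sqr_ge0.
have mu_sqr : (F * (k / 2)) ^+ 2 = F ^+ 2 * k ^+ 2 / 4 by rewrite exprMn; field.
by split; rewrite -ler_sqr ?nnegrE ?mulr_ge0 ?divr_ge0 // ?sqrtr_ge0 //; nra.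
Qed.
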